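(* For all integers $n\ge 3$ and $1<k<n$, the girth of $G=H_B(n,k)$ is $4$.
   Context: Fix integers $n\ge 2$ and $1\le k<n$ and positive real numbers $x_1<x_2<\dots<x_n$. Let $\mathscr{B}_n=\{\pm x_1,\pm x_2,\dots,\pm x_{n-1},x_n\}$ (so $-x_n\notin\mathscr{B}_n$). Let $\phi(\mathscr{B}_n)$ be the family of all nonempty subsets $S\subseteq\mathscr{B}_n$ whose elements have pairwise distinct absolute values and whose element of largest absolute value is positive. Let $\mathscr{B}_n^+=\{x_1,\dots,x_n\}$, let $V_1$ be the set of all $k$-element subsets of $\mathscr{B}_n^+$, and let $V_2=\phi(\mathscr{B}_n)\setminus V_1$. For $A\in\phi(\mathscr{B}_n)$ put $A^\dagger=\{|a|:a\in A\}$. The bipartite Kneser B type-$k$ graph $H_B(n,k)$ is the simple graph with vertex set $V_1\cup V_2$ in which $X\in V_1$ and $Y\in V_2$ are adjacent if and only if $X\subseteq Y^\dagger$ or $Y^\dagger\subseteq X$, and there are no other edges. The girth is the length of a shortest cycle. *)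

From mathcomp Require Import all_boot.
Set Implicit Arguments. Unset Strict Implicit. Unset Printing Implicit Defensive.

(* Encoding: since 0 < x_1 < ... < x_n, the signed element +x_(i+1) is encoded
   as (true, i) and -x_(i+1) as (false, i), with i : 'I_n.  The absolute value
   |±x_(i+1)| = x_(i+1) corresponds to the index i, and comparing absolute
   values corresponds to comparing indices. *)
Definition signed n := (bool * 'I_n)%type.

(* membership in B_n : every element except -x_n *)
Definition in_Bn n (p : signed n) : bool := p.1 || (val p.2 != n.-1).

Definition dagger n (A : {set signed n}) : {set 'I_n} := [set p.2 | p in A].

Definition phiB n (S : {set signed n}) : bool :=
  [&& S != set0,
      [forall p in S, in_Bn p],
      [forall p in S, forall q in S, (p.2 == q.2) ==> (p == q)] &
      [forall p in S, [forall q in S, val q.2 <= val p.2] ==> p.1]].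

Definition V1 n k (S : {set signed n}) : bool :=
  [forall p in S, p.1] && (#|S| == k).

(* vertex set V1 ∪ V2 = phi(B_n) (V1 ⊆ phi(B_n) when k ≥ 1) ; V2 = phi \ V1 *)
Definition vertexHB n k (S : {set signed n}) : bool := phiB S || V1 k S.
Definition V2 n k (S : {set signed n}) : bool := phiB S && ~~ V1 k S.

Definition adjHB_dir n k (X Y : {set signed n}) : bool :=
  [&& V1 k X, V2 k Y & (dagger X \subset dagger Y) || (dagger Y \subset dagger X)].

Definition adjHB n k : rel {set signed n} :=
  fun X Y => adjHB_dir k X Y || adjHB_dir k Y X.

Definition has_cycle_len (T : finType) (V : pred T) (e : rel T) (m : nat) : Prop :=
  exists s : seq T, [/\ size s = m, 3 <= m, uniq s, all V s & cycle e s].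

Definition girth_eq (T : finType) (V : pred T) (e : rel T) (g : nat) : Prop :=
  has_cycle_len V e g /\ forall m, has_cycle_len V e m -> g <= m.

(* H_B(n,k) is bipartite with parts V_1 and V_2, so it has no triangle.  A
   4-cycle is X_0 - Y_0 - X_1 - Y_1 with the windows X_s = {x_(s+1), ...,
   x_(s+k)} in V_1 (this needs k < n) and Y_c = B_n^+ with x_(c+1) negated in
   V_2 (the largest element x_n stays positive as long as c + 1 < n, which
   needs n >= 3 for c = 1): the absolute values of Y_c are all of
   {x_1, ..., x_n}, so Y_c is adjacent to every vertex of V_1. *)
From mathcomp Require Import all_boot.

Set Implicit Arguments.
Unset Strict Implicit.
Unset Printing Implicit Defensive.

Lemma triangle_free_of_2coloring (T : eqType) (e : rel T) (f : T -> bool) :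
  (forall x y, e x y -> f x != f y) -> forall a b c, ~~ cycle e [:: a; b; c].
Proof.
move=> ef a b c; apply/negP; rewrite /= andbT => /and3P [/ef ab /ef bc /ef ca].
by move: ab bc ca; case: (f a); case: (f b); case: (f c).
Qed.

Section HB.
Variables n k : nat.

Lemma adjHB_V1_neq (X Y : {set signed n}) : adjHB k X Y -> V1 k X != V1 k Y.
Proof.
by case/orP=> /and3P [VX /andP [_ VY] _]; move: VX VY;
  case: (V1 k X); case: (V1 k Y).
Qed.

Lemma adjHB_sym : symmetric (@adjHB n k).
Proof. by move=> X Y; rewrite /adjHB orbC. Qed.

Lemma adjHB_full_dagger (X Y : {set signed n}) :
  V1 k X -> V2 k Y -> dagger Y = [set: 'I_n] -> adjHB k X Y.
Proof. by move=> VX VY dY; rewrite /adjHB /adjHB_dir VX VY dY subsetT. Qed.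

Lemma V1_V2_neq (X Y : {set signed n}) : V1 k X -> V2 k Y -> X != Y.
Proof. by move=> VX /andP [_ VY]; apply: contraNneq VY => <-. Qed.

Section Window.
Variable s : nat.
Hypothesis sk_le_n : s + k <= n.

Lemma window_ord_subproof (i : 'I_k) : s + i < n.
Proof. by apply: leq_trans sk_le_n; rewrite ltn_add2l. Qed.

Definition window : {set signed n} :=
  [set (true, Ordinal (window_ord_subproof i)) | i : 'I_k].

Lemma V1_window : V1 k window.
Proof.
apply/andP; split; first by apply/forall_inP=> p /imsetP [i _ ->].
rewrite card_imset ?card_ord // => i j [/addnI ij]; exact: val_inj.
Qed.

Lemma window_memE (i : 'I_n) : ((true, i) \in window) = (s <= i < s + k).
Proof.
apply/imsetP/andP=> [[j _ [->]] | [si ik]] /=.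
  by rewrite leq_addr ltn_add2l.
have jk : i - s < k by rewrite ltn_subLR.
by exists (Ordinal jk) => //; congr pair; apply: val_inj; rewrite /= subnKC.
Qed.

End Window.

Definition negate_one (c : nat) : {set signed n} :=
  [set (val i != c, i) | i : 'I_n].

Lemma dagger_negate_one c : dagger (negate_one c) = [set: 'I_n].
Proof.
apply/setP=> i; rewrite in_setT; apply/imsetP; exists (val i != c, i) => //.
exact: imset_f.
Qed.

Lemma V2_negate_one c : c.+1 < n -> V2 k (negate_one c).
Proof.
move=> cn; have c_lt_n : c < n by apply: ltnW.
have n_pos : 0 < n by apply: leq_ltn_trans cn.
have top_lt_n : n.-1 < n by rewrite ltn_predL.
have top_neq_c : n.-1 != c by rewrite neq_ltn ltn_predRL cn orbT.
set top := Ordinal top_lt_n.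
have top_in : (true, top) \in negate_one c.
  by apply/imsetP; exists top; rewrite ?top_neq_c.
apply/andP; split; last first.
  apply/negP=> /andP [/forall_inP pos _].
  suff /pos : (false, Ordinal c_lt_n) \in negate_one c by [].
  by apply/imsetP; exists (Ordinal c_lt_n); rewrite /= ?eqxx.
apply/and4P; split.
- by apply/set0Pn; exists (true, top).
- apply/forall_inP=> _ /imsetP [i _ ->]; rewrite /in_Bn /=.
  by case: eqP => //= ->; rewrite eq_sym.
- apply/forall_inP=> _ /imsetP [i _ ->]; apply/forall_inP=> _ /imsetP [j _ ->].
  by apply/implyP=> /= /eqP ->.
- apply/forall_inP=> _ /imsetP [i _ ->] /=; apply/implyP=> /forall_inP maxi.
  have top_le_i : n.-1 <= i := maxi _ top_in.
  apply: contra top_neq_c => /eqP <-.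
  by rewrite eqn_leq top_le_i -ltnS prednK ?ltn_ord.
Qed.

Lemma negate_one_inj c d : c < n -> negate_one c = negate_one d -> c = d.
Proof.
move=> cn cd; have : (false, Ordinal cn) \in negate_one d.
  by rewrite -cd; apply/imsetP; exists (Ordinal cn); rewrite /= ?eqxx.
by case/imsetP=> i _ [/esym/negbFE/eqP <- <-].
Qed.

End HB.

Theorem mainTheorem8 (n k : nat) :
  3 <= n -> 1 < k < n ->
  girth_eq (@vertexHB n k) (@adjHB n k) 4.
Proof.
move=> n3 /andP [k1 kn]; split; last first.
  move=> m [s [size_s m3 _ _ cyc]]; rewrite ltn_neqAle m3 andbT.
  apply: contraTneq cyc => m_eq3; move: size_s; rewrite -m_eq3.
  case: s => [|a [|b [|c [|]]]] // _.
  exact: (triangle_free_of_2coloring (f := V1 k) (@adjHB_V1_neq n k)).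
have k0n : 0 + k <= n := ltnW kn.
have k1n : 1 + k <= n by [].
have VX0 := V1_window k0n; have VX1 := V1_window k1n.
have VY0 : V2 k (negate_one n 0) := V2_negate_one k (ltnW n3).
have VY1 : V2 k (negate_one n 1) := V2_negate_one k n3.
have adj X c : V1 k X -> V2 k (negate_one n c) -> adjHB k X (negate_one n c).
  by move=> VX VY; apply: adjHB_full_dagger VX VY (dagger_negate_one n c).
have k_pos : 0 < k := ltnW k1.
have X01 : window k0n != window k1n.
  apply/eqP=> /setP/(_ (true, Ordinal (leq_trans k_pos (ltnW kn)))).
  by rewrite !window_memE /= add0n k_pos.
have Y01 : negate_one n 0 != negate_one n 1.
  by apply/eqP=> /(negate_one_inj (ltnW (ltnW n3))).
exists [:: window k0n; negate_one n 0; window k1n; negate_one n 1]; split => //.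
- rewrite /= !inE !negb_or X01 Y01 !(V1_V2_neq VX0, V1_V2_neq VX1) //.
  by rewrite eq_sym (V1_V2_neq VX1 VY0).
- rewrite /= /vertexHB VX0 VX1 !orbT.
  by rewrite (proj1 (andP VY0)) (proj1 (andP VY1)).
- rewrite /= (adj _ 0) // adjHB_sym (adj _ 0) //.
  by rewrite (adj _ 1) // adjHB_sym (adj _ 1).
Qed.
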